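(* Let $k\ge3$, let $G=(V,E)$ be a $k$-uniform hypergraph with connected components $V_1,\dots,V_s$ ($s\ge1$), and let $\mathbf x\in\mathbb R^n$ be an H-eigenvector of the Laplacian tensor $\mathcal D-\mathcal A$ (respectively, of the signless Laplacian tensor $\mathcal D+\mathcal A$) corresponding to the eigenvalue $0$. Then for every $i\in[s]$ with $\mathbf x(V_i)\ne0$: $\mathbf x(V_i)$ is an H-eigenvector of $(\mathcal D-\mathcal A)(V_i)$ (respectively $(\mathcal D+\mathcal A)(V_i)$) corresponding to the eigenvalue $0$, $\mathrm{sup}(\mathbf x(V_i))=V_i$, and there is a real $c_i\neq0$ with $x_j\in\{c_i,-c_i\}$ for all $j\in V_i$.
   Context: A $k$-uniform hypergraph $G=(V,E)$ has vertex set $V=[n]$ ($n\ge k$) and nonempty edge set $E$ of $k$-element subsets; $E_i=\{e\in E:i\in e\}$, $d_i=|E_i|$. Connected components: maximal sets of vertices pairwise joined by chains of edges with consecutive edges intersecting; an isolated vertex (singleton) is also a component. $\mathcal A$: $a_{i_1\dots i_k}=\frac1{(k-1)!}$ if $\{i_1,\dots,i_k\}\in E$, else $0$; $\mathcal D$ diagonal with $d_{i\dots i}=d_i$; so $((\mathcal D\pm\mathcal A)\mathbf x^{k-1})_i=d_ix_i^{k-1}\pm\sum_{e\in E_i}\prod_{j\in e\setminus\{i\}}x_j$. A nonzero $\mathbf x$ is an eigenvector of $\mathcal T$ for $\lambda$ if $(\mathcal T\mathbf x^{k-1})_i=\lambda x_i^{k-1}$ for all $i$; an H-eigenvector is a real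 eigenvector. $\mathcal T(S)$ is the sub-tensor with indices restricted to $S$, $\mathbf x(S)=(x_j)_{j\in S}$, and $\mathrm{sup}(\mathbf x)=\{i:x_i\ne0\}$. *)

From HB Require Import structures.
From mathcomp Require Import all_boot all_order all_algebra.
Set Implicit Arguments. Unset Strict Implicit. Unset Printing Implicit Defensive.
Import Order.TTheory GRing.Theory Num.Theory.
Local Open Scope ring_scope.

(* An order-k, dimension-n tensor is a function on index k-tuples
   f : {ffun 'I_k -> 'I_n}, f = (i_1,...,i_k) with i_1 = f at position 0. *)

Definition k_uniform_hypergraph (n k : nat) (E : {set {set 'I_n}}) : Prop :=
  (k <= n)%N /\ E != set0 /\ (forall e, e \in E -> #|e| = k).

Definition edges_at n (E : {set {set 'I_n}}) (i : 'I_n) : {set {set 'I_n}} :=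
  [set e in E | i \in e].
Definition deg n (E : {set {set 'I_n}}) (i : 'I_n) : nat := #|edges_at E i|.

Definition adj_tensor (R : realFieldType) n k (E : {set {set 'I_n}})
  (f : {ffun 'I_k -> 'I_n}) : R :=
  if (f @: [set: 'I_k]) \in E then ((k.-1)`!)%:R^-1 else 0.

Definition deg_tensor (R : realFieldType) n k (E : {set {set 'I_n}})
  (f : {ffun 'I_k -> 'I_n}) : R :=
  \sum_(i : 'I_n | [forall j, f j == i]) (deg E i)%:R.

Definition lap_tensor (R : realFieldType) n k (E : {set {set 'I_n}}) (signless : bool)
  (f : {ffun 'I_k -> 'I_n}) : R :=
  if signless then deg_tensor R E f + adj_tensor R E f
  else deg_tensor R E f - adj_tensor R E f.

(* (T(S) x(S)^{k-1})_i for i in S: sum over index tuples with first index i and all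
   other indices in S *)
Definition sub_apply (R : realFieldType) n k (T : {ffun 'I_k -> 'I_n} -> R)
  (S : {set 'I_n}) (x : 'I_n -> R) (i : 'I_n) : R :=
  \sum_(f : {ffun 'I_k -> 'I_n} |
          [forall j : 'I_k, if val j == 0%N then f j == i else f j \in S])
     T f * \prod_(j : 'I_k | val j != 0%N) x (f j).

Definition H_eigvec_sub (R : realFieldType) n k (T : {ffun 'I_k -> 'I_n} -> R)
  (S : {set 'I_n}) (x : 'I_n -> R) (lambda : R) : Prop :=
  (exists2 j, j \in S & x j != 0) /\
  (forall i, i \in S -> sub_apply T S x i = lambda * x i ^+ k.-1).

Definition H_eigvec (R : realFieldType) n k (T : {ffun 'I_k -> 'I_n} -> R)
  (x : 'I_n -> R) (lambda : R) : Prop := H_eigvec_sub T [set: 'I_n] x lambda.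

(* connected components: classes of the reflexive-transitive closure of
   "lie in a common edge"; isolated vertices give singleton components *)
Definition hadj n (E : {set {set 'I_n}}) : rel 'I_n :=
  fun u v => [exists e in E, (u \in e) && (v \in e)].
Definition components n (E : {set {set 'I_n}}) : {set {set 'I_n}} :=
  [set [set v | connect (hadj E) u v] | u in [set: 'I_n]].

Definition supp_on n (R : realFieldType) (x : 'I_n -> R) (S : {set 'I_n}) : {set 'I_n} :=
  [set j in S | x j != 0].

From HB Require Import structures.
From mathcomp Require Import all_boot all_order all_algebra.
Set Implicit Arguments. Unset Strict Implicit. Unset Printing Implicit Defensive.
Import Order.TTheory GRing.Theory Num.Theory.
Local Open Scope ring_scope.

(* Write the order of the tensors as k+1 and L for D -+ A.  The u-th entry of
   L x^k is  d_u x_u^k +- (1/k!) sum_f prod_{j>0} x_(f j),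
   the sum ranging over the tuples f with f 0 = u whose entries form an edge;
   there are exactly d_u * k! of them, each edge through u being enumerated by
   k! tuples.  If L x^k = 0 and |x_u| = m dominates |x| on all neighbours of u,
   then  d_u m^k = (1/k!) |sum| <= (1/k!) * d_u k! m^k,  so equality holds
   throughout and every neighbour v of u has |x_v| = m.  Starting at a vertex of
   maximal modulus in a component C, this spreads along edges to all of C, which
   gives the support and the sign pattern; the eigen-equation restricted to C
   is the full one, because C is closed under adjacency. *)

Section IndexTuples.
Variables n k : nat.
Implicit Types (f : {ffun 'I_k.+1 -> 'I_n}) (g : {ffun 'I_k -> 'I_n}).
Implicit Types (e : {set 'I_n}) (u : 'I_n).

Definition tuple_tail f : {ffun 'I_k -> 'I_n} := [ffun j => f (lift ord0 j)].

Definition tuple_cons u g : {ffun 'I_k.+1 -> 'I_n} :=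
  [ffun j => if unlift ord0 j is Some j' then g j' else u].

Lemma tuple_consK u : cancel (tuple_cons u) tuple_tail.
Proof. by move=> g; apply/ffunP => j; rewrite !ffunE liftK. Qed.

Lemma tuple_tailK f : tuple_cons (f ord0) (tuple_tail f) = f.
Proof. by apply/ffunP => j; rewrite ffunE; case: unliftP => [j'|] ->; rewrite ?ffunE. Qed.

Lemma tuple_cons_head u g : tuple_cons u g ord0 = u.
Proof. by rewrite ffunE unlift_none. Qed.

Lemma card_tuples_with_head u (P : pred {ffun 'I_k -> 'I_n}) :
  #|[set f : {ffun 'I_k.+1 -> 'I_n} | (f ord0 == u) && P (tuple_tail f)]| = #|[set g | P g]|.
Proof.
rewrite -[RHS](card_imset _ (can_inj (tuple_consK u))); apply: eq_card => f.
rewrite inE; apply/andP/imsetP => [[/eqP <- Pf] | [g]].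
  by exists (tuple_tail f); rewrite ?inE ?tuple_tailK.
by rewrite inE => Pg ->; rewrite tuple_cons_head tuple_consK.
Qed.

Lemma onto_edge_iff_tail f e : f ord0 \in e -> #|e| = k.+1 ->
  (f @: setT == e) =
  (tuple_tail f \in ffun_on (mem (e :\ f ord0))) && injectiveb (tuple_tail f).
Proof.
move=> head_e card_e; have card_dom : #|[set: 'I_k.+1]| = k.+1 by rewrite cardsT card_ord.
apply/eqP/andP => [im_f | [/ffun_onP tail_in /injectiveP tail_inj]].
  have /imset_injP inj_in : #|f @: setT| == #|[set: 'I_k.+1]|.
    by rewrite im_f card_e card_dom.
  have inj_f : injective f by move=> a b; apply: inj_in; rewrite inE.
  split; last by apply/injectiveP => a b; rewrite !ffunE => /inj_f/lift_inj.
  apply/ffun_onP => j; rewrite ffunE !inE -im_f imset_f ?inE // andbT.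
  by rewrite (inj_eq inj_f) eq_sym neq_lift.
have inj_f : injective f.
  move=> a b; case: (unliftP ord0 a) => [a'|] ->; case: (unliftP ord0 b) => [b'|] -> // fab.
  - by congr lift; apply: tail_inj; rewrite !ffunE.
  - by have := tail_in a'; rewrite ffunE fab !inE eqxx.
  - by have := tail_in b'; rewrite ffunE -fab !inE eqxx.
have im_sub : f @: setT \subset e.
  apply/subsetP => _ /imsetP[j _ ->]; case: (unliftP ord0 j) => [j'|] -> //.
  by have := tail_in j'; rewrite ffunE !inE => /andP[].
by apply/eqP; rewrite eqEcard im_sub card_e card_imset // card_dom /=.
Qed.

Lemma card_tuples_onto_edge u e : u \in e -> #|e| = k.+1 ->
  #|[set f : {ffun 'I_k.+1 -> 'I_n} | (f ord0 == u) && (f @: setT == e)]| = k`!.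
Proof.
move=> u_e card_e.
have card_rest : #|e :\ u| = k by move: card_e; rewrite (cardsD1 u e) u_e => -[].
pose inj_into_rest := [pred g : {ffun 'I_k -> 'I_n} |
  (g \in ffun_on (mem (e :\ u))) && injectiveb g].
rewrite (eq_card (B := [set f : {ffun 'I_k.+1 -> 'I_n} |
                          (f ord0 == u) && inj_into_rest (tuple_tail f)])).
  by rewrite card_tuples_with_head (card_inj_ffuns_on 'I_k) card_ord card_rest ffactnn.
move=> f; rewrite !inE; case: eqP => //= head_u.
by rewrite -head_u in u_e *; exact: onto_edge_iff_tail.
Qed.

End IndexTuples.

Lemma prod_eq_max (R : realDomainType) k (a : 'I_k -> R) m : 0 < m ->
  (forall j, 0 <= a j <= m) -> \prod_(j < k) a j = m ^+ k -> forall j, a j = m.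
Proof.
move=> m_gt0 a_bnd prod_eq j; apply/eqP; rewrite eq_le (andP (a_bnd j)).2 /= leNgt.
apply/negP => a_lt; suff : \prod_(i < k) a i < \prod_(i < k) m.
  by rewrite prod_eq prodr_const card_ord ltxx.
rewrite (bigD1 j) //= [X in _ < X](bigD1 j) //=.
have others_gt0 : 0 < \prod_(i < k | i != j) m by apply: prodr_gt0.
apply: (le_lt_trans (y := a j * \prod_(i < k | i != j) m)); last by rewrite ltr_pM2r.
by rewrite ler_wpM2l ?(andP (a_bnd j)).1 //; apply: ler_prod => i _; exact: a_bnd.
Qed.

Section Components.
Variables (n : nat) (E : {set {set 'I_n}}).

Lemma hadj_sym : symmetric (hadj E).
Proof. by move=> a b; apply: eq_existsb => e; rewrite (andbC (a \in e)). Qed.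

Lemma component_connect C a b : C \in components E -> a \in C -> b \in C ->
  connect (hadj E) a b.
Proof.
case/imsetP=> c _ ->; rewrite !inE => ca cb.
by apply: connect_trans cb; rewrite (sym_connect_sym hadj_sym).
Qed.

Lemma component_closed C a b : C \in components E -> hadj E a b -> a \in C -> b \in C.
Proof.
by case/imsetP=> c _ -> ab; rewrite !inE => ca; apply: connect_trans ca (connect1 ab).
Qed.

Lemma component_invariant C (P : pred 'I_n) a b : C \in components E ->
  (forall v w, v \in C -> hadj E v w -> P v -> P w) -> a \in C -> b \in C -> P a -> P b.
Proof.
move=> CE step aC bC Pa; pose Q := [pred v | (v \in C) ==> P v].
have Q_step v w : hadj E v w -> Q v -> Q w.
  move=> vw /implyP Qv; apply/implyP => wC.
  have vC : v \in C by apply: component_closed CE _ wC; rewrite hadj_sym.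
  exact: step vC vw (Qv vC).
have Q_closed : closed (hadj E) Q.
  by move=> v w vw; apply/idP/idP; apply: Q_step => //; rewrite hadj_sym.
have := closed_connect Q_closed (component_connect CE aC bC).
by rewrite !inE aC bC Pa /= => /esym.
Qed.

End Components.

Section LaplacianKernel.
Variables (R : realFieldType) (n k : nat) (E : {set {set 'I_n}}) (s : bool).
Implicit Types (f : {ffun 'I_k.+1 -> 'I_n}) (S : {set 'I_n}) (i u v : 'I_n).

Local Notation L := (@lap_tensor R n k.+1 E s).
Local Notation index_tuple := {ffun 'I_k.+1 -> 'I_n}.

Definition tail_prod (x : 'I_n -> R) f : R := \prod_(j < k) x (f (lift ord0 j)).

Definition edge_tuples u : {set index_tuple} :=
  [set f : index_tuple | (f ord0 == u) && (f @: setT \in E)].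

Lemma sub_apply_head_tail (T : index_tuple -> R) S x i :
  sub_apply T S x i =
  \sum_(f : index_tuple | (f ord0 == i) && [forall j : 'I_k, f (lift ord0 j) \in S])
    T f * tail_prod x f.
Proof.
apply: eq_big => [f | f _]; last by rewrite big_mkcond big_ord_recl /= mul1r.
apply/forallP/andP => [all_j | [/eqP head_i /forallP tail_S] j].
  by split; [exact: all_j ord0 | apply/forallP => j; exact: all_j (lift ord0 j)].
by case: (unliftP ord0 j) => [j'|] -> /=; rewrite ?head_i.
Qed.

Lemma sub_apply_full (T : index_tuple -> R) x i :
  sub_apply T setT x i = \sum_(f : index_tuple | f ord0 == i) T f * tail_prod x f.
Proof.
rewrite sub_apply_head_tail; apply: eq_bigl => f.
by rewrite andb_idr // => _; apply/forallP => j; rewrite inE.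
Qed.

Lemma deg_tensor_const i : deg_tensor R E ([ffun=> i] : index_tuple) = (deg E i)%:R.
Proof.
rewrite /deg_tensor (big_pred1 i) // => v.
by apply/forallP/eqP => [/(_ ord0) | -> j]; rewrite ffunE // => /eqP.
Qed.

Lemma deg_tensor_nonconst f : f != [ffun=> f ord0] -> deg_tensor R E f = 0.
Proof.
move=> nonconst; rewrite /deg_tensor big_pred0 // => v; apply/negP => /forallP all_v.
move/eqP: nonconst; apply; apply/ffunP => j.
by rewrite ffunE (eqP (all_v j)) (eqP (all_v ord0)).
Qed.

Lemma lap_tensor_vanish f : f != [ffun=> f ord0] -> f @: setT \notin E -> L f = 0.
Proof.
move=> nonconst not_edge; rewrite /lap_tensor /adj_tensor deg_tensor_nonconst //.
by rewrite (negbTE not_edge); case: s; rewrite ?addr0 ?subr0.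
Qed.

(* For S closed under adjacency at i, restricting L to S does not change the
   i-th entry of L x^k: all discarded tuples carry a zero entry of L. *)
Lemma sub_apply_closed S x i : i \in S -> (forall v, hadj E i v -> v \in S) ->
  sub_apply L S x i = sub_apply L setT x i.
Proof.
move=> iS closedS; rewrite sub_apply_head_tail sub_apply_full.
rewrite [RHS](bigID (fun f : index_tuple => [forall j : 'I_k, f (lift ord0 j) \in S])) /=.
rewrite [X in _ = _ + X]big1 ?addr0 // => f /andP[/eqP head_i /forallPn[j out_j]].
rewrite lap_tensor_vanish ?mul0r //; apply: contra out_j.
  by move/eqP/ffunP/(_ (lift ord0 j)); rewrite ffunE head_i => ->.
move=> f_edge; apply: closedS; apply/existsP; exists (f @: setT).
by rewrite f_edge -head_i !imset_f.
Qed.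

Lemma lap_apply_full x i :
  sub_apply L setT x i = (deg E i)%:R * x i ^+ k +
    (if s then 1 else -1) * ((k`!)%:R^-1 * \sum_(f in edge_tuples i) tail_prod x f).
Proof.
rewrite sub_apply_full (eq_bigr (fun f => deg_tensor R E f * tail_prod x f +
  (if s then 1 else -1) * (adj_tensor R E f * tail_prod x f))); last first.
  by move=> f _; rewrite /lap_tensor; case: s; rewrite ?mulrDl ?mulrBl ?mul1r ?mulN1r ?mulNr.
rewrite big_split /= -mulr_sumr; congr (_ + _ * _).
  rewrite (bigD1 [ffun=> i]) ?ffunE //= big1 ?addr0.
    rewrite deg_tensor_const /tail_prod (eq_bigr (fun _ => x i)) => [|j _].
      by rewrite prodr_const card_ord.
    by rewrite ffunE.
  by move=> f /andP[/eqP head_i nonconst]; rewrite deg_tensor_nonconst ?mul0r ?head_i.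
rewrite mulr_sumr big_mkcond [RHS]big_mkcond; apply: eq_bigr => f _.
by rewrite inE /adj_tensor; case: (f ord0 == i) => /=; [case: ifP; rewrite ?mul0r |].
Qed.

Hypothesis uniform : forall e, e \in E -> #|e| = k.+1.

Lemma card_edge_tuples u : #|edge_tuples u| = (deg E u * k`!)%N.
Proof.
rewrite -sum1_card (partition_big (fun f : index_tuple => f @: setT) (mem (edges_at E u))) /=.
  rewrite /deg -sum_nat_const; apply: eq_bigr => e; rewrite inE => /andP[eE ue].
  rewrite -(card_tuples_onto_edge ue (uniform eE)) -sum1_card; apply: eq_bigl => f.
  by rewrite !inE; case: (f ord0 == u) => //=; case: eqP => [->|]; rewrite ?eE ?andbF.
by move=> f; rewrite !inE => /andP[/eqP <- ->]; rewrite imset_f.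
Qed.

Lemma edge_tuple_neighbour u f j : f \in edge_tuples u -> hadj E u (f (lift ord0 j)).
Proof.
rewrite inE => /andP[/eqP <- f_edge]; apply/existsP; exists (f @: setT).
by rewrite f_edge !imset_f.
Qed.

Variable x : 'I_n -> R.
Hypothesis kernel : forall i, sub_apply L setT x i = 0.

(* Equality case of the triangle inequality in the u-th kernel equation:
   if |x_u| = m bounds |x| on the neighbours of u, every monomial at u has
   modulus m^k. *)
Lemma kernel_extremal_tuples u m : `|x u| = m -> (forall v, hadj E u v -> `|x v| <= m) ->
  forall f, f \in edge_tuples u -> `|tail_prod x f| = m ^+ k.
Proof.
move=> xu nbr_le.
have tuple_le f : f \in edge_tuples u -> `|tail_prod x f| <= m ^+ k.
  move=> fu; have <- : \prod_(j < k) m = m ^+ k by rewrite prodr_const card_ord.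
  rewrite normr_prod.
  by apply: ler_prod => j _; rewrite normr_ge0 nbr_le //; exact: edge_tuple_neighbour.
set S := \sum_(f in edge_tuples u) tail_prod x f.
have fact_pos : 0 < (k`!)%:R :> R by rewrite ltr0n fact_gt0.
have norm_S : `|S| = (k`!)%:R * ((deg E u)%:R * m ^+ k).
  have /eqP := kernel u; rewrite lap_apply_full addr_eq0 => /eqP/(congr1 Num.norm).
  rewrite normrN !normrM !normr_nat normrX xu normfV !normr_nat => ->.
  have sign_norm : `|(if s then 1 else -1) : R| = 1 by case: s; rewrite ?normrN normr1.
  by rewrite sign_norm mul1r mulrA divff ?gt_eqF // mul1r.
have sum_eq : \sum_(f in edge_tuples u) (m ^+ k - `|tail_prod x f|) = 0.
  rewrite sumrB; apply/eqP; rewrite subr_eq0 eq_le (ler_sum _ tuple_le) andbT.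
  rewrite sumr_const card_edge_tuples -mulr_natl natrM mulrAC mulrC -norm_S.
  exact: ler_norm_sum.
move=> f fu; apply/eqP; rewrite eq_sym -subr_eq0; apply/eqP.
by apply: (psumr_eq0P _ sum_eq) => // g gu; rewrite subr_ge0 tuple_le.
Qed.

Lemma max_modulus_spreads u v m : 0 < m -> `|x u| = m ->
  (forall w, hadj E u w -> `|x w| <= m) -> hadj E u v -> `|x v| = m.
Proof.
move=> m_gt0 xu nbr_le /existsP[e /andP[eE /andP[ue ve]]].
have /card_gt0P[f] : (0 < #|[set f : index_tuple | (f ord0 == u) && (f @: setT == e)]|)%N.
  by rewrite (card_tuples_onto_edge ue (uniform eE)) fact_gt0.
rewrite inE => /andP[/eqP head_u /eqP im_f].
have fu : f \in edge_tuples u by rewrite inE head_u eqxx im_f eE.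
move: ve; rewrite -im_f => /imsetP[j _ ->].
case: (unliftP ord0 j) => [j'|] ->; last by rewrite head_u.
apply: (prod_eq_max (a := fun j => `|x (f (lift ord0 j))|) m_gt0).
  by move=> i; rewrite normr_ge0 nbr_le //; exact: edge_tuple_neighbour.
by rewrite /= -normr_prod (kernel_extremal_tuples xu nbr_le fu).
Qed.

End LaplacianKernel.

Theorem corollary4p1 (R : realFieldType) (n k : nat) (E : {set {set 'I_n}})
  (signless : bool) (x : 'I_n -> R) :
  (3 <= k)%N ->
  k_uniform_hypergraph k E ->
  H_eigvec (@lap_tensor R n k E signless) x 0 ->
  forall C, C \in components E -> (exists2 j, j \in C & x j != 0) ->
    [/\ H_eigvec_sub (@lap_tensor R n k E signless) C x 0,
        supp_on x C = C &
        exists2 c : R, c != 0 & forall j, j \in C -> x j = c \/ x j = - c].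
Proof.
move=> k_ge3 [_ [_ uniform]] [_ eig] C CE [j0 j0C xj0].
case: k k_ge3 uniform eig => [//|k] _ uniform eig.
have kernel i : sub_apply (@lap_tensor R n k.+1 E signless) setT x i = 0.
  by rewrite eig ?inE ?mul0r.
have [i iC i_max] := @arg_maxP _ _ _ j0 (mem C) (fun v => `|x v|) j0C.
set m := `|x i|.
have m_gt0 : 0 < m by apply: lt_le_trans (i_max j0 j0C); rewrite normr_gt0.
have modulus_m v : v \in C -> `|x v| = m.
  move=> vC; apply/eqP.
  apply: (component_invariant (P := fun w => `|x w| == m) CE _ iC vC) => //.
  move=> a b aC ab /eqP xa; apply/eqP.
  apply: (max_modulus_spreads uniform kernel m_gt0 xa _ ab).
  by move=> w aw; apply: i_max; exact: component_closed CE aw aC.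
split.
- split=> [|v vC]; first by exists j0.
  by rewrite sub_apply_closed ?kernel ?mul0r // => w vw; exact: component_closed CE vw vC.
- apply/setP => v; rewrite !inE; case vC: (v \in C) => //=.
  by rewrite -normr_gt0 modulus_m.
- exists m; first by rewrite gt_eqF.
  move=> v /modulus_m <-; case: (lerP 0 (x v)) => [/ger0_norm | /ltr0_norm] ->.
    by left.
  by right; rewrite opprK.
Qed.
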